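(* Let $G$ be a plane graph, $H$ a subgraph of $G$, $L$ a list assignment for $G$ with $|L(v)|=10$ for all $v\in V(G)$, and $\alpha,\beta$ two $L$-colorings of $G$ that differ only on vertices of $H$. (i) If there exists an ordering $\sigma$ of $V(H)$ such that $d_G(v)+d_\sigma(v)\le 9$ for all $v\in V(H)$, where $d_\sigma(v)$ denotes the number of neighbors of $v$ in $H$ that follow $v$ in $\sigma$, then there is a recoloring sequence from $\alpha$ to $\beta$ that recolors each vertex of $H$ at most twice and recolors no vertex outside $H$. (ii) In particular, the same conclusion holds whenever $H$ is $2$-degenerate and $d_G(v)\le 7$ for all $v\in V(H)$.
   Context: A list assignment $L$ assigns to each vertex a set of colors; an $L$-coloring is a proper coloring $\varphi$ with $\varphi(v)\in L(v)$ for all $v$. A recoloring sequence from $\alpha$ to $\beta$ is a sequence of $L$-colorings of $G$ beginning with $\alpha$ and ending with $\beta$ in which each two consecutive colorings differ in the color of exactly one vertex (that vertex is recolored at that step). $d_G(v)$ denotes the degree of $v$ in $G$. A graph is $2$-degenerate if every subgraph has a vertex of degree at most $2$. *)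

(* Finite simple graphs as symmetric irreflexive relations. *)
From mathcomp Require Import all_boot all_fingroup.
Set Implicit Arguments. Unset Strict Implicit. Unset Printing Implicit Defensive.

Definition dart (T : finType) (e : rel T) := {d : T * T | e d.1 d.2}.

Definition rev_dart (T : finType) (e : rel T) (se : symmetric e) (d : dart e) : dart e :=
  exist (fun p : T * T => e p.1 p.2) ((sval d).2, (sval d).1)
        (etrans (se (sval d).2 (sval d).1) (valP d)).

Definition rotation_system (T : finType) (e : rel T) (rho : {perm dart e}) : Prop :=
  (forall d, (sval (rho d)).1 = (sval d).1) /\
  (forall d d' : dart e, (sval d).1 = (sval d').1 -> fconnect rho d d').

Definition n_faces (T : finType) (e : rel T) (se : symmetric e) (rho : {perm dart e}) : nat :=
  n_comp (frel (fun d => rho (rev_dart se d))) (fun _ : dart e => true).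

Definition isolated (T : finType) (e : rel T) : {set T} :=
  [set v | [forall u, ~~ e v u]].

(* A plane graph: a simple graph together with a combinatorial embedding of
   genus 0, i.e. Euler's formula V - E + F = 2 * (#components) holds, where each
   isolated vertex contributes one face.  Written without subtraction and with
   #darts = 2E:  2 (V + F) = 4 * #components + #darts. *)
Definition plane_graph (T : finType) (e : rel T) : Prop :=
  exists se : symmetric e, irreflexive e /\
  exists rho : {perm dart e}, rotation_system rho /\
    2 * (#|T| + (n_faces se rho + #|isolated e|)) = 4 * n_comp e (fun _ : T => true) + #|{: dart e}|.

Definition deg (T : finType) (e : rel T) (v : T) : nat := #|[set u | e v u]|.

(* d_sigma(v): neighbours of v in H (vertex set S, H induced) that follow v in sigma *)
Definition deg_sigma (T : finType) (e : rel T) (sigma : seq T) (v : T) : nat :=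
  count (fun u => e v u && (index v sigma < index u sigma)) sigma.

(* H = G[S] is 2-degenerate: every nonempty subgraph has a vertex of degree <= 2
   (it suffices to quantify over the vertex sets of induced subgraphs) *)
Definition two_degenerate (T : finType) (e : rel T) (S : {set T}) : Prop :=
  forall X : {set T}, X \subset S -> X != set0 ->
    exists2 v, v \in X & #|[set u in X | e v u]| <= 2.

Definition coloring (T : finType) := {ffun T -> nat}.

Definition L_coloring (T : finType) (e : rel T) (L : T -> seq nat) (c : coloring T) : bool :=
  [forall v, c v \in L v] && [forall u, forall v, e u v ==> (c u != c v)].

Definition differ_one (T : finType) (c c' : coloring T) : bool :=
  [exists v, (c v != c' v) && [forall w, (w != v) ==> (c w == c' w)]].

Definition recolor_count (T : finType) (c0 : coloring T) (s : seq (coloring T)) (v : T) : nat :=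
  count (fun p : coloring T * coloring T => p.1 v != p.2 v) (zip (c0 :: s) s).

Definition recoloring_sequence (T : finType) (e : rel T) (L : T -> seq nat)
    (c0 c1 : coloring T) (s : seq (coloring T)) : Prop :=
  [/\ all (L_coloring e L) (c0 :: s), path (@differ_one T) c0 s & last c0 s = c1].

Definition recolor_within_twice (T : finType) (e : rel T) (L : T -> seq nat)
    (S : {set T}) (alpha beta : coloring T) : Prop :=
  exists s : seq (coloring T), recoloring_sequence e L alpha beta s /\
    forall v, if v \in S then recolor_count alpha s v <= 2
              else recolor_count alpha s v == 0.

From mathcomp Require Import all_boot all_fingroup.
Set Implicit Arguments. Unset Strict Implicit. Unset Printing Implicit Defensive.

(* Recolor in two passes.  First go along sigma and give each vertex v a color
   of L(v) avoiding the current colors of all its neighbours and the target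
   colors beta(u) of its neighbours u that follow it in sigma: at most
   d_G(v) + d_sigma(v) <= 9 < 10 colors are forbidden.  Then go along sigma
   backwards and recolor each v to beta(v): neighbours later in sigma already
   have their beta color, neighbours earlier in sigma still carry a color
   chosen to differ from beta(v), and neighbours outside H never move.  Each
   vertex of H is recolored once per pass.  A 2-degenerate H has an ordering
   with d_sigma <= 2 (repeatedly put first a vertex of degree <= 2 in what is
   left), which reduces (ii) to (i). *)

Lemma pairwise_rev (A : Type) (r : rel A) (s : seq A) :
  pairwise r (rev s) = pairwise (fun x y => r y x) s.
Proof.
elim: s => [|x s IHs] //.
by rewrite rev_cons pairwise_rcons [in RHS]pairwise_cons all_rev IHs.
Qed.

Lemma exists_notin (A : eqType) (s t : seq A) :
  uniq s -> size t < size s -> exists2 x, x \in s & x \notin t.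
Proof.
move=> s_uniq lt_ts; apply/allPn/negP => /allP sub_st.
by have := leq_trans lt_ts (uniq_leq_size s_uniq sub_st); rewrite ltnn.
Qed.

Section Orderings.
Variables (T : finType) (e : rel T).

Lemma deg_sigma_cons_head v p :
  v \notin p -> deg_sigma e (v :: p) v = count (e v) p.
Proof.
move=> vNp; rewrite /deg_sigma /= eqxx ltnn andbF add0n.
apply: eq_in_count => u up /=.
by rewrite ifN ?andbT //; apply: contraNneq vNp => ->.
Qed.

Lemma deg_sigma_cons v p w :
  v \notin p -> w != v -> deg_sigma e (v :: p) w = deg_sigma e p w.
Proof.
move=> vNp wNv; rewrite /deg_sigma /= eqxx eq_sym (negbTE wNv) ltn0 andbF add0n.
apply: eq_in_count => u up /=.
by rewrite ifN //; apply: contraNneq vNp => ->.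
Qed.

Lemma degenerate_ordering (k : nat) (S : {set T}) :
  (forall X : {set T}, X \subset S -> X != set0 ->
     exists2 v, v \in X & #|[set u in X | e v u]| <= k) ->
  exists2 sigma, perm_eq sigma (enum S) &
    forall v, v \in S -> deg_sigma e sigma v <= k.
Proof.
move=> degen; suff: forall n (X : {set T}), #|X| <= n -> X \subset S ->
    exists2 sigma, perm_eq sigma (enum X) &
      forall v, v \in X -> deg_sigma e sigma v <= k.
  by apply; first exact: leqnn.
elim=> [|n IHn] X.
  by rewrite leqn0 => /eqP/cards0_eq -> _; exists [::]; rewrite ?enum_set0.
move=> card_X sub_XS; have [->|X_neq0] := eqVneq X set0.
  by exists [::]; rewrite ?enum_set0.
have [v vX deg_v] := degen X sub_XS X_neq0.
have card_Xv : #|X :\ v| <= n by move: card_X; rewrite (cardsD1 v X) vX add1n ltnS.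
have [sigma perm_sigma deg_sigma_le] := IHn _ card_Xv (subset_trans (subsetDl X _) sub_XS).
have mem_sigma w : (w \in sigma) = (w \in X :\ v) by rewrite (perm_mem perm_sigma) mem_enum.
have vNsigma : v \notin sigma by rewrite mem_sigma !inE eqxx.
exists (v :: sigma).
  apply: uniq_perm; rewrite ?enum_uniq //=.
    by rewrite vNsigma (perm_uniq perm_sigma) enum_uniq.
  move=> w; rewrite in_cons mem_sigma mem_enum !inE.
  by have [->|] := eqVneq w v.
move=> w wX; have [->|wNv] := eqVneq w v.
  rewrite deg_sigma_cons_head // -size_filter; apply: leq_trans deg_v.
  rewrite cardE; apply: uniq_leq_size.
    by rewrite filter_uniq // (perm_uniq perm_sigma) enum_uniq.
  by move=> u; rewrite mem_filter mem_sigma mem_enum !inE => /andP[-> /andP[_ ->]].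
by rewrite deg_sigma_cons // deg_sigma_le // !inE wNv.
Qed.

End Orderings.

Section Recoloring.
Variables (T : finType) (e : rel T) (L : T -> seq nat).
Hypothesis e_sym : symmetric e.

Lemma L_coloringP (c : coloring T) :
  reflect ((forall v, c v \in L v) /\ (forall u v, e u v -> c u != c v))
          (L_coloring e L c).
Proof.
apply: (iffP andP) => [[/forallP inL /forallP proper]|[inL proper]].
  by split=> // u v; move: (proper u) => /forallP/(_ v)/implyP.
split; apply/forallP => // u; apply/forallP => v; apply/implyP; exact: proper.
Qed.

Definition set_color (c : coloring T) v x : coloring T :=
  [ffun w => if w == v then x else c w].

Lemma set_colorE (c : coloring T) v x w :
  set_color c v x w = if w == v then x else c w.
Proof. by rewrite ffunE. Qed.

Lemma L_coloring_set_color (c : coloring T) v x :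
  L_coloring e L c -> x \in L v -> (forall u, u != v -> e v u -> c u != x) ->
  L_coloring e L (set_color c v x).
Proof.
move=> /L_coloringP[inL proper] xL fresh_x; apply/L_coloringP; split=> [w|a b eab].
  by rewrite set_colorE; case: eqP => [->|].
rewrite !set_colorE; have [av|aNv] := eqVneq a v; have [bv|bNv] := eqVneq b v.
- by have := proper _ _ eab; rewrite av bv eqxx.
- by rewrite eq_sym fresh_x // -av.
- by rewrite fresh_x // e_sym -bv.
- exact: proper.
Qed.

Definition recolorable (c c' : coloring T) (b : T -> nat) :=
  exists s, recoloring_sequence e L c c' s /\ forall w, recolor_count c s w <= b w.

Lemma recolorable_refl (c : coloring T) :
  L_coloring e L c -> recolorable c c (fun=> 0).
Proof. by move=> c_col; exists [::]; split; first split; rewrite //= c_col. Qed.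

Lemma recolorable_le (c c' : coloring T) b b' :
  recolorable c c' b -> (forall w, b w <= b' w) -> recolorable c c' b'.
Proof. by case=> s [seq_s le_sb] le_bb'; exists s; split=> // w; apply: leq_trans. Qed.

Lemma recolor_count_cat (c0 : coloring T) s1 s2 w :
  recolor_count c0 (s1 ++ s2) w =
    recolor_count c0 s1 w + recolor_count (last c0 s1) s2 w.
Proof.
elim: s1 c0 => [|c s1 IHs] c0 //=.
by move: (IHs c); rewrite /recolor_count /= => ->; rewrite addnA.
Qed.

Lemma recolorable_trans (c1 c2 c3 : coloring T) b1 b2 :
  recolorable c1 c2 b1 -> recolorable c2 c3 b2 ->
  recolorable c1 c3 (fun w => b1 w + b2 w).
Proof.
case=> s1 [[col1 path1 last1] le1] [s2 [[col2 path2 last2] le2]].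
exists (s1 ++ s2); split=> [|w]; last by rewrite recolor_count_cat last1 leq_add.
split; last by rewrite last_cat last1.
- by move: col1 col2 => /= /andP[-> col1] /andP[_ col2]; rewrite all_cat col1 col2.
- by rewrite cat_path path1 last1 path2.
Qed.

Lemma recolorable_set_color (c : coloring T) v x :
  L_coloring e L c -> L_coloring e L (set_color c v x) ->
  recolorable c (set_color c v x) (fun w => w == v).
Proof.
move=> c_col c'_col; have [cvx|cvNx] := eqVneq (c v) x.
  have -> : set_color c v x = c.
    by apply/ffunP => w; rewrite set_colorE; case: eqP => [->|].
  exact: recolorable_le (recolorable_refl c_col) _.
exists [:: set_color c v x]; split=> [|w].
  split; rewrite //= ?c_col ?c'_col // andbT.
  apply/existsP; exists v; rewrite set_colorE eqxx cvNx /=.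
  by apply/forallP => w; apply/implyP => /negbTE wNv; rewrite set_colorE wNv.
rewrite /recolor_count /= addn0 set_colorE.
by have [->|] := eqVneq w v; [case: (_ != _) | rewrite eqxx].
Qed.

Variable beta : coloring T.

Lemma recolor_avoiding_targets (p : seq T) (c : coloring T) :
  uniq p -> L_coloring e L c ->
  (forall v, uniq (L v)) ->
  (forall v, v \in p -> deg e v + deg_sigma e p v < size (L v)) ->
  exists c', [/\ recolorable c c' (fun w => w \in p), L_coloring e L c',
    {in [predC p], c' =1 c} &
    pairwise (fun a b => e a b ==> (c' a != beta b)) p].
Proof.
move=> + + L_uniq; elim: p c => [|v p IHp] c.
  move=> _ c_col _; exists c; split=> //.
  exact: recolorable_le (recolorable_refl c_col) _.
move=> /= /andP[vNp p_uniq] c_col small_deg.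
pose forbidden := [seq c u | u <- enum [set u | e v u]] ++ [seq beta u | u <- p & e v u].
have [x xL xNforbidden] : exists2 x, x \in L v & x \notin forbidden.
  apply: exists_notin => //; rewrite size_cat !size_map -cardE size_filter.
  by rewrite -deg_sigma_cons_head // small_deg ?mem_head.
move: xNforbidden; rewrite mem_cat negb_or => /andP[x_fresh x_Nbeta].
have cx_col : L_coloring e L (set_color c v x).
  apply: L_coloring_set_color => // u _ evu; apply: contraNneq x_fresh => <-.
  by rewrite map_f // mem_enum inE.
have [|c' [rec' c'_col c'_out c'_pw]] := IHp _ p_uniq cx_col.
  move=> w wp; have wNv : w != v by apply: contraNneq vNp => <-.
  by rewrite -(deg_sigma_cons _ vNp wNv) small_deg // in_cons wp orbT.
have c'v : c' v = x by rewrite c'_out ?inE // set_colorE eqxx.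
exists c'; split=> //.
- apply: recolorable_le (recolorable_trans (recolorable_set_color c_col cx_col) rec') _.
  move=> w; rewrite in_cons; have [->|] //= := eqVneq w v.
  by rewrite (negbTE vNp).
- move=> w; rewrite !inE negb_or => /andP[wNv wNp].
  by rewrite c'_out ?inE // set_colorE (negbTE wNv).
- rewrite c'_pw andbT; apply/allP => u up; apply/implyP => evu.
  by rewrite c'v; apply: contraNneq x_Nbeta => ->; rewrite map_f // mem_filter evu.
Qed.

Hypothesis beta_col : L_coloring e L beta.

Lemma recolor_to_targets (q : seq T) (c : coloring T) :
  uniq q -> L_coloring e L c -> {in [predC q], c =1 beta} ->
  pairwise (fun a b => e b a ==> (c b != beta a)) q ->
  recolorable c beta (fun w => w \in q).
Proof.
elim: q c => [|v q IHq] c.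
  move=> _ c_col c_out _; have -> : c = beta by apply/ffunP => w; exact: c_out.
  exact: recolorable_le (recolorable_refl beta_col) _.
move=> /= /andP[vNq q_uniq] c_col c_out /andP[/allP later_ok pw].
have cv_col : L_coloring e L (set_color c v (beta v)).
  apply: L_coloring_set_color => //; first by case/L_coloringP: beta_col.
  move=> u uNv evu; have [uq|uNq] := boolP (u \in q).
    by have := later_ok u uq; rewrite e_sym evu eq_sym.
  rewrite c_out; last by rewrite !inE negb_or uNv.
  by case/L_coloringP: beta_col => _ proper; rewrite eq_sym proper.
have cv_out : {in [predC q], set_color c v (beta v) =1 beta}.
  move=> w; rewrite inE set_colorE => wNq; have [->|wNv] //= := eqVneq w v.
  by rewrite c_out // !inE negb_or wNv.
have cv_pw : pairwise (fun a b => e b a ==> (set_color c v (beta v) b != beta a)) q.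
  rewrite -(eq_in_pairwise (P := [pred w | w != v])
                           (r := fun a b => e b a ==> (c b != beta a))) //.
    by move=> a b _ /= bNv; rewrite set_colorE (negbTE bNv).
  by apply/allP => w wq /=; apply: contraNneq vNq => <-.
apply: recolorable_le (recolorable_trans (recolorable_set_color c_col cv_col)
                                          (IHq _ q_uniq cv_col cv_out cv_pw)) _.
move=> w; rewrite in_cons; have [->|] //= := eqVneq w v.
by rewrite (negbTE vNq).
Qed.

Lemma recolor_twice_of_ordering (S : {set T}) (alpha : coloring T) (sigma : seq T) :
  (forall v, uniq (L v)) -> L_coloring e L alpha ->
  (forall v, v \notin S -> alpha v = beta v) ->
  perm_eq sigma (enum S) ->
  (forall v, v \in S -> deg e v + deg_sigma e sigma v < size (L v)) ->
  recolor_within_twice e L S alpha beta.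
Proof.
move=> L_uniq alpha_col alpha_out perm_sigma small_deg.
have sigma_uniq : uniq sigma by rewrite (perm_uniq perm_sigma) enum_uniq.
have mem_sigma w : (w \in sigma) = (w \in S) by rewrite (perm_mem perm_sigma) mem_enum.
have [|gamma [rec1 gamma_col gamma_out gamma_pw]] :=
  recolor_avoiding_targets sigma_uniq alpha_col L_uniq.
  by move=> v; rewrite mem_sigma; apply: small_deg.
have rec2 : recolorable gamma beta (fun w => w \in rev sigma).
  apply: recolor_to_targets; rewrite ?rev_uniq ?pairwise_rev //.
  move=> w; rewrite !inE mem_rev => wNsigma.
  by rewrite gamma_out ?alpha_out ?inE -?mem_sigma.
have [s [seq_s count_s]] := recolorable_trans rec1 rec2.
exists s; split=> // v; move: (count_s v); rewrite /= mem_rev mem_sigma.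
by case: (v \in S) => //; rewrite leqn0.
Qed.

End Recoloring.

Theorem proposition6 (T : finType) (e : rel T) (S : {set T})
    (L : T -> seq nat) (alpha beta : {ffun T -> nat}) :
  plane_graph e ->
  (forall v, uniq (L v) /\ size (L v) = 10) ->
  L_coloring e L alpha -> L_coloring e L beta ->
  (forall v, v \notin S -> alpha v = beta v) ->
  ((exists sigma : seq T, perm_eq sigma (enum S) /\
      (forall v, v \in S -> deg e v + deg_sigma e sigma v <= 9)) ->
     recolor_within_twice e L S alpha beta)
  /\
  (two_degenerate e S -> (forall v, v \in S -> deg e v <= 7) ->
     recolor_within_twice e L S alpha beta).
Proof.
case=> e_sym _ L_ok alpha_col beta_col alpha_out.
have L_uniq v : uniq (L v) by case: (L_ok v).
have by_ordering : (exists sigma : seq T, perm_eq sigma (enum S) /\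
    (forall v, v \in S -> deg e v + deg_sigma e sigma v <= 9)) ->
    recolor_within_twice e L S alpha beta.
  case=> sigma [perm_sigma small_deg].
  apply: recolor_twice_of_ordering perm_sigma _ => // v vS.
  by case: (L_ok v) => _ ->; rewrite ltnS small_deg.
split=> // degen max_deg; apply: by_ordering.
have [sigma perm_sigma deg_sigma_le] := degenerate_ordering degen.
exists sigma; split=> // v vS.
by rewrite -[9]/(7 + 2) leq_add ?max_deg ?deg_sigma_le.
Qed.
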